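(* Let $m,n$ be positive integers, $r$ an integer with $1\leq r\leq\min\{m,n\}$ if $m\neq n$ and $1\le r\le n-1$ if $m=n$, and $a\in\{0,\dots,r\}$. Let $Q(\lambda)$ be an $m\times n$ complex matrix pencil with normal rank at most $r$. If $Q\in\overline{{\cal O}({\cal K}_a^{m\times n})}$, then $Q(\lambda)^T\in\overline{{\cal O}({\cal K}_{r-a}^{n\times m})}$.
   Context: A matrix pencil is $A+\lambda B$ with complex matrices; normal rank is rank over $\mathbb{C}(\lambda)$. ${\cal O}(Q)$ denotes the orbit of $Q$ under strict equivalence ($Q\mapsto EQF$, $E,F$ constant invertible) and the bar denotes closure in the space of pencils of the given size. $L_k$ is the $k\times(k+1)$ pencil with $\lambda$ at $(i,i)$ and $1$ at $(i,i+1)$. For sizes $p\times q$ and $b\in\{0,\dots,r\}$, ${\cal K}_b^{p\times q}$ is defined by the Euclidean divisions $b=\alpha(q-r)+s$ ($0\le s<q-r$), $r-b=\beta(p-r)+t$ ($0\le t<p-r$), as the $p\times q$ block-diagonal pencil with $s$ blocks $L_{\alpha+1}$, $q-r-s$ blocks $L_\alpha$, $t$ blocks $L_{\beta+1}^T$ and $p-r-t$ blocks $L_\beta^T$. *)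

(* complex numbers are R[i] for R : realType (= the field C). *)
From HB Require Import structures.
From mathcomp Require Import all_boot all_order all_algebra.
From mathcomp Require Import reals.
From mathcomp Require Import complex fraction.
Set Implicit Arguments. Unset Strict Implicit. Unset Printing Implicit Defensive.
Import Order.TTheory GRing.Theory Num.Theory.
Local Open Scope ring_scope.

(* A p x q pencil A + lambda B is represented by the pair (A, B). *)
Definition pencil (C : Type) (p q : nat) := ('M[C]_(p, q) * 'M[C]_(p, q))%type.

Definition pencil_tr (C : Type) p q (Q : pencil C p q) : pencil C q p :=
  ((Q.1)^T, (Q.2)^T).

Definition normal_rank (C : fieldType) p q (Q : pencil C p q) : nat :=
  \rank (\matrix_(i < p, j < q)
           (tofrac (((Q.1 i j)%:P + 'X * (Q.2 i j)%:P) : {poly C})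
             : {fraction {poly C}})).

(* Closure of the strict-equivalence orbit O(K), in the Euclidean topology of
   the space of pencils (C^(2pq)), written out with the max-entry norm:
   Q is in the closure iff every neighbourhood of Q meets O(K). *)
Definition in_orbit_closure (R : realType) p q (Q K : pencil R[i] p q) : Prop :=
  forall eps : R, 0 < eps ->
    exists (E : 'M[R[i]]_p) (F : 'M[R[i]]_q),
      [/\ E \in unitmx, F \in unitmx &
          forall (i : 'I_p) (j : 'I_q),
            `|(E *m K.1 *m F - Q.1) i j| < (eps%:C)%C /\
            `|(E *m K.2 *m F - Q.2) i j| < (eps%:C)%C].

(* A block (false, k) is L_k (k x (k+1)), a block
   (true, k) is L_k^T ((k+1) x k).  L_k has lambda at (i,i) and 1 at (i,i+1),
   i.e. A-part 1 at (i,i+1), B-part 1 at (i,i).  bd_entry bs i j returns the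
   (A-entry, B-entry) at position (i,j) of the block-diagonal direct sum. *)
Fixpoint bd_entry (C : pzRingType) (bs : seq (bool * nat)) (i j : nat) : C * C :=
  match bs with
  | [::] => (0, 0)
  | (tr, k) :: bs' =>
      let rs := if tr then k.+1 else k in
      let cs := if tr then k else k.+1 in
      if (i < rs)%N && (j < cs)%N then
        (if tr then (((i == j.+1) : nat)%:R, ((i == j) : nat)%:R)
               else (((j == i.+1) : nat)%:R, ((i == j) : nat)%:R))
      else if (rs <= i)%N && (cs <= j)%N then bd_entry C bs' (i - rs) (j - cs)
      else (0, 0)
  end.

(* The list of blocks of K_b^{p x q} (rank r):
   b = alpha (q-r) + s, r - b = beta (p-r) + t. *)
Definition K_blocks (p q r b : nat) : seq (bool * nat) :=
  let alpha := (b %/ (q - r))%N in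
  let s := (b %% (q - r))%N in
  let beta := ((r - b) %/ (p - r))%N in
  let t := ((r - b) %% (p - r))%N in
  nseq s (false, alpha.+1) ++ nseq (q - r - s)%N (false, alpha)
  ++ nseq t (true, beta.+1) ++ nseq (p - r - t)%N (true, beta).

(* The Euclidean divisions defining K_b^{p x q} make sense (division by
   q - r, resp. p - r, is only meaningful when the divisor is positive or the
   dividend is 0, in which case there are no blocks of that kind). *)
Definition K_wf (p q r b : nat) : bool :=
  ((r < q)%N || (b == 0%N)) && ((r < p)%N || (r - b == 0)%N).

Definition Kpencil (C : pzRingType) (p q r b : nat) : pencil C p q :=
  (\matrix_(i < p, j < q) (bd_entry C (K_blocks p q r b) i j).1,
   \matrix_(i < p, j < q) (bd_entry C (K_blocks p q r b) i j).2).

(* Transposition exchanges the blocks L_k and L_k^T, so the transpose of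
   K_a^{m x n} is the block diagonal pencil made of the L^T-blocks of
   K_{r-a}^{n x m} followed by its L-blocks: it is K_{r-a}^{n x m} up to a
   permutation of rows and columns that swaps these two groups of blocks.
   Since (E K F)^T = F^T K^T E^T, transposition maps the closure of O(K_a)
   into that of O(K_a^T) = O(K_{r-a}^{n x m}). *)

From HB Require Import structures.
From mathcomp Require Import all_boot all_order all_algebra.
From mathcomp Require Import reals complex zify fingroup perm.
Set Implicit Arguments.
Unset Strict Implicit.
Unset Printing Implicit Defensive.
Import GRing.Theory.

Definition pencil_act (C : pzRingType) p q p' q'
    (U : 'M[C]_(p', p)) (V : 'M[C]_(q, q')) (K : pencil C p q) : pencil C p' q' :=
  (U *m K.1 *m V, U *m K.2 *m V)%R.

Definition block_rows (b : bool * nat) : nat := let: (tr, k) := b in if tr then k.+1 else k.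
Definition block_cols (b : bool * nat) : nat := let: (tr, k) := b in if tr then k else k.+1.
Definition bd_rows (bs : seq (bool * nat)) : nat := sumn (map block_rows bs).
Definition bd_cols (bs : seq (bool * nat)) : nat := sumn (map block_cols bs).
Definition bd_tr (bs : seq (bool * nat)) : seq (bool * nat) := map (fun b => (~~ b.1, b.2)) bs.

Lemma bd_rows_cons b bs : bd_rows (b :: bs) = block_rows b + bd_rows bs.
Proof. by []. Qed.

Lemma bd_cols_cons b bs : bd_cols (b :: bs) = block_cols b + bd_cols bs.
Proof. by []. Qed.

Lemma bd_rows_cat X Y : bd_rows (X ++ Y) = bd_rows X + bd_rows Y.
Proof. by rewrite /bd_rows map_cat sumn_cat. Qed.

Lemma bd_cols_cat X Y : bd_cols (X ++ Y) = bd_cols X + bd_cols Y.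
Proof. by rewrite /bd_cols map_cat sumn_cat. Qed.

Lemma bd_rows_nseq c b : bd_rows (nseq c b) = c * block_rows b.
Proof. by rewrite /bd_rows map_nseq; elim: c => //= c ->; rewrite mulSn. Qed.

Lemma bd_tr_cat X Y : bd_tr (X ++ Y) = bd_tr X ++ bd_tr Y.
Proof. exact: map_cat. Qed.

Lemma bd_rows_tr bs : bd_rows (bd_tr bs) = bd_cols bs.
Proof. by elim: bs => [|[[] k] bs IH] //; move: IH; rewrite /bd_rows /bd_cols /= => ->. Qed.

Lemma bd_cols_tr bs : bd_cols (bd_tr bs) = bd_rows bs.
Proof. by elim: bs => [|[[] k] bs IH] //; move: IH; rewrite /bd_rows /bd_cols /= => ->. Qed.

Section BlockDiagonalEntries.
Variable C : pzRingType.

Lemma bd_entry_cons tr k bs i j : bd_entry C ((tr, k) :: bs) i j =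
  if (i < block_rows (tr, k)) && (j < block_cols (tr, k)) then
    (if tr then (((i == j.+1) : nat)%:R, ((i == j) : nat)%:R)
     else (((j == i.+1) : nat)%:R, ((i == j) : nat)%:R))%R
  else if (block_rows (tr, k) <= i) && (block_cols (tr, k) <= j) then
    bd_entry C bs (i - block_rows (tr, k)) (j - block_cols (tr, k))
  else (0, 0)%R.
Proof. by []. Qed.

Lemma bd_entry_out bs i j :
  (bd_rows bs <= i) || (bd_cols bs <= j) -> bd_entry C bs i j = (0, 0)%R.
Proof.
elim: bs i j => [|[tr k] bs IH] i j //.
rewrite bd_entry_cons bd_rows_cons bd_cols_cons.
move: (block_rows (tr, k)) (block_cols (tr, k)) => rk ck out.
case: ifP => [/andP[? ?]|_]; first by exfalso; lia.
by case: ifP => [/andP[? ?]|//]; apply: IH; lia.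
Qed.

Lemma bd_entry_cat X Y i j : bd_entry C (X ++ Y) i j =
  if (bd_rows X <= i) && (bd_cols X <= j)
  then bd_entry C Y (i - bd_rows X) (j - bd_cols X)
  else bd_entry C X i j.
Proof.
elim: X i j => [|[tr k] X IH] i j; first by rewrite !subn0.
rewrite cat_cons !bd_entry_cons IH bd_rows_cons bd_cols_cons.
move: (block_rows (tr, k)) (block_cols (tr, k)) => rk ck.
case: (ltnP i rk) => ?; case: (ltnP j ck) => ? /=.
1-3: by rewrite [in RHS]ifF //; lia.
by rewrite -!leq_subRL // !subnDA.
Qed.

Lemma bd_entry_tr bs i j : bd_entry C (bd_tr bs) j i = bd_entry C bs i j.
Proof.
elim: bs i j => [|[[] k] bs IH] i j //=;
  by rewrite andbC; case: ifP => _; rewrite ?(eq_sym i j) // andbC; case: ifP.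
Qed.

End BlockDiagonalEntries.

Definition swap_index (a b i : nat) : nat := if i < a then i + b else i - a.

Lemma swap_index_lt a b p i : a + b = p -> i < p -> swap_index a b i < p.
Proof. by rewrite /swap_index; case: ifP; lia. Qed.

Section SwapPerm.
Variables (a b p : nat) (e : a + b = p).

Definition swap_ord (i : 'I_p) : 'I_p := Ordinal (swap_index_lt e (ltn_ord i)).

Lemma swap_ord_inj : injective swap_ord.
Proof.
move=> [x ltxp] [y ltyp] /(congr1 val) /=; rewrite /swap_index => exy.
by apply: val_inj => /=; move: exy; do 2 case: ifP; lia.
Qed.

Definition swap_perm : 'S_p := perm swap_ord_inj.

Lemma swap_permE i : val (swap_perm i) = swap_index a b i.
Proof. by rewrite permE. Qed.

End SwapPerm.

Lemma bd_entry_catC (C : pzRingType) X Y i j :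
  i < bd_rows X + bd_rows Y -> j < bd_cols X + bd_cols Y ->
  bd_entry C (X ++ Y) i j = bd_entry C (Y ++ X)
    (swap_index (bd_rows X) (bd_rows Y) i) (swap_index (bd_cols X) (bd_cols Y) j).
Proof.
move=> ltiXY ltjXY; rewrite !bd_entry_cat /swap_index.
case: (ltnP i (bd_rows X)) => ?; case: (ltnP j (bd_cols X)) => ? /=.
- by rewrite ifT ?addnK //; lia.
- by rewrite ifF ?bd_entry_out //; lia.
- by rewrite ifF ?bd_entry_out //; lia.
- by rewrite ifF //; lia.
Qed.

Definition euclid_blocks (tr : bool) (N b : nat) : seq (bool * nat) :=
  nseq (b %% N) (tr, (b %/ N).+1) ++ nseq (N - b %% N) (tr, b %/ N).

Lemma K_blocksE p q r b :
  K_blocks p q r b = euclid_blocks false (q - r) b ++ euclid_blocks true (p - r) (r - b).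
Proof. by rewrite /K_blocks catA. Qed.

Lemma bd_tr_euclid tr N b : bd_tr (euclid_blocks tr N b) = euclid_blocks (~~ tr) N b.
Proof. by rewrite /bd_tr map_cat !map_nseq. Qed.

Lemma bd_rows_euclid tr N b :
  (0 < N) || (b == 0) -> bd_rows (euclid_blocks tr N b) = b + tr * N.
Proof.
move=> N_or_b0; have le_modN : b %% N <= N.
  by case/orP: N_or_b0 => [/ltn_pmod/ltnW | /eqP->] //; rewrite mod0n.
rewrite bd_rows_cat !bd_rows_nseq {5}(divn_eq b N).
by case: tr; rewrite /block_rows; nia.
Qed.

Lemma bd_cols_euclid tr N b :
  (0 < N) || (b == 0) -> bd_cols (euclid_blocks tr N b) = b + (~~ tr) * N.
Proof. by move=> N_or_b0; rewrite -bd_rows_tr bd_tr_euclid bd_rows_euclid. Qed.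

Section KroneckerPencil.
Variables (m n r a : nat).
Hypotheses (le_ar : a <= r) (le_rn : r <= n) (le_rm : r <= m) (wf : K_wf m n r a).

Lemma bd_rows_K_blocks : bd_rows (K_blocks m n r a) = m.
Proof.
case/andP: wf => wf_n wf_m.
by rewrite K_blocksE bd_rows_cat !bd_rows_euclid //=; lia.
Qed.

Lemma bd_cols_K_blocks : bd_cols (K_blocks m n r a) = n.
Proof.
case/andP: wf => wf_n wf_m.
by rewrite K_blocksE bd_cols_cat !bd_cols_euclid //=; lia.
Qed.

Lemma Kpencil_tr (C : pzRingType) : exists (s : 'S_n) (t : 'S_m),
  pencil_tr (Kpencil C m n r a) =
  pencil_act (perm_mx s) (perm_mx t^-1) (Kpencil C n m r (r - a)).
Proof.
set X := euclid_blocks true (n - r) a; set Y := euclid_blocks false (m - r) (r - a).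
have trK : bd_tr (K_blocks m n r a) = X ++ Y by rewrite K_blocksE bd_tr_cat !bd_tr_euclid.
have K' : K_blocks n m r (r - a) = Y ++ X by rewrite K_blocksE subKn.
have rowsXY : bd_rows X + bd_rows Y = n.
  by rewrite -bd_rows_cat -trK bd_rows_tr bd_cols_K_blocks.
have colsXY : bd_cols X + bd_cols Y = m.
  by rewrite -bd_cols_cat -trK bd_cols_tr bd_rows_K_blocks.
exists (swap_perm rowsXY), (swap_perm colsXY).
rewrite /pencil_act -!row_permE -!col_permE; congr pair; apply/matrixP => i j;
  by rewrite !mxE -bd_entry_tr trK K' bd_entry_catC ?rowsXY ?colsXY // !swap_permE.
Qed.

End KroneckerPencil.

Local Open Scope ring_scope.

Section OrbitClosure.
Variables (R : realType) (p q : nat).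

Lemma in_orbit_closure_tr (Q K : pencil R[i] p q) :
  in_orbit_closure Q K -> in_orbit_closure (pencil_tr Q) (pencil_tr K).
Proof.
move=> QK eps eps_gt0; have [E [F [unitE unitF close]]] := QK eps eps_gt0.
exists F^T, E^T; split; rewrite ?unitmx_tr // => i j.
by rewrite /pencil_tr /= -!mulmxA -!trmx_mul -!linearB !mxE; have := close j i; rewrite !mxE.
Qed.

Lemma in_orbit_closure_act (U : 'M[R[i]]_p) (V : 'M[R[i]]_q) (Q K : pencil R[i] p q) :
  U \in unitmx -> V \in unitmx ->
  in_orbit_closure Q (pencil_act U V K) -> in_orbit_closure Q K.
Proof.
move=> unitU unitV QK eps eps_gt0; have [E [F [unitE unitF close]]] := QK eps eps_gt0.
exists (E *m U), (V *m F); split; rewrite ?unitmx_mul ?unitE ?unitU ?unitF ?unitV //.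
by move=> i j; have := close i j; rewrite /pencil_act /= !mulmxA.
Qed.

End OrbitClosure.

Theorem lemma3p8 (R : realType) (m n r a : nat) (Q : pencil R[i] m n) :
  (0 < m)%N -> (0 < n)%N -> (1 <= r)%N ->
  (m <> n -> (r <= minn m n)%N) -> (m = n -> (r <= n - 1)%N) ->
  (a <= r)%N ->
  K_wf m n r a ->
  (normal_rank Q <= r)%N ->
  in_orbit_closure Q (Kpencil R[i] m n r a) ->
  in_orbit_closure (pencil_tr Q) (Kpencil R[i] n m r (r - a)).
Proof.
move=> _ _ _ r_min_neq r_le_pred le_ar wf _ QK.
have /andP[le_rm le_rn] : (r <= m)%N && (r <= n)%N.
  rewrite -leq_min; have [eq_mn | /eqP ne_mn] := eqVneq m n; last exact: r_min_neq.
  by have := r_le_pred eq_mn; rewrite eq_mn minnn; lia.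
have [s [t trK]] := Kpencil_tr le_ar le_rn le_rm wf R[i].
apply: (in_orbit_closure_act (unitmx_perm _ s) (unitmx_perm _ t^-1)).
by rewrite -trK; apply: in_orbit_closure_tr.
Qed.
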